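(* Let $f:[0,\infty)\to\mathbb{R}$ be convex with $f(1)=0$ and $G$ an increasing convex function with $G(0)=0$ such that $(G,f)$ is information-subadditive. Consider a message set $\mathcal{M}=\{1,\dots,|\mathcal{M}|\}$ with $|\mathcal{M}|\ge2$ and message $M$ uniform on $\mathcal{M}$, an encoder mapping each $m$ to a codeword $X^n(m)\in\mathcal{X}^n$, a memoryless channel $p_{Y^n|X^n}(y^n|x^n)=\prod_{i=1}^n W_{Y|X}(y_i|x_i)$ on finite alphabets, and a decoder mapping $Y^n$ to an estimate $\hat M\in\mathcal{M}$, with average error probability $\Pr(M\ne\hat M)=\epsilon$. Then $$n\ge \frac{G\!\left(\frac{1}{|\mathcal{M}|}f(|\mathcal{M}|(1-\epsilon))+\frac{|\mathcal{M}|-1}{|\mathcal{M}|}f\!\left(\frac{|\mathcal{M}|\epsilon}{|\mathcal{M}|-1}\right)\right)}{\max_{p_X} I_{G,f}(X;Y)},$$ where in the denominator $Y$ is the output of $W_{Y|X}$ with input $X\sim p_X$.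
   Context: For distributions $p\ll q$ on a finite set, $D_f(p\|q)=\sum_x q(x) f(p(x)/q(x))$ with $0f(0/0)=0$. For random variables $X,Y$ on finite sets, $I_{G,f}(X;Y)=\min_{q_Y}\sum_x p_X(x)\,G(D_f(p_{Y|X=x}\|q_Y))$. $(G,f)$ is information-subadditive if for all random variables $X,Y,Z$ on finite sets with $p_{XYZ}=p_Xp_{Y|X}p_{Z|X}$, $I_{G,f}(X;YZ)\le I_{G,f}(X;Y)+I_{G,f}(X;Z)$. *)

From mathcomp Require Import all_boot all_order all_algebra.
From mathcomp Require Import boolp classical_sets reals.
Set Implicit Arguments. Unset Strict Implicit. Unset Printing Implicit Defensive.
Import Order.TTheory GRing.Theory Num.Theory.
Local Open Scope ring_scope.
Local Open Scope classical_set_scope.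

Section Defs.
Variable R : realType.

Definition is_dist (T : finType) (p : T -> R) : Prop :=
  (forall t, 0 <= p t) /\ \sum_(t : T) p t = 1.

Definition is_channel (X Y : finType) (W : X -> Y -> R) : Prop :=
  forall x, is_dist (W x).

Definition abs_cont (T : finType) (p q : T -> R) : Prop :=
  forall t, q t = 0 -> p t = 0.

(* D_f(p||q) = sum_x q(x) f(p(x)/q(x)); terms with q(x)=0 (hence p(x)=0
   when p << q) contribute 0, matching the convention 0 f(0/0) = 0. *)
Definition Df (f : R -> R) (T : finType) (p q : T -> R) : R :=
  \sum_(t : T) q t * f (p t / q t).

(* I_{G,f}(X;Y) for X ~ pX and p_{Y|X} = W:
   inf over distributions q_Y (with p_{Y|X=x} << q_Y for every x in the
   support of pX, so that all divergences are defined) of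
   sum_x pX(x) G(D_f(p_{Y|X=x} || q_Y)). *)
Definition IGf (G f : R -> R) (X Y : finType) (pX : X -> R) (W : X -> Y -> R)
  : R :=
  inf [set r | exists q : Y -> R,
         [/\ is_dist q,
             (forall x, 0 < pX x -> abs_cont (W x) q) &
             r = \sum_(x : X) pX x * G (Df f (W x) q)]].

Definition prod_channel (X Y Z : finType) (W1 : X -> Y -> R) (W2 : X -> Z -> R)
  : X -> (Y * Z)%type -> R :=
  fun x yz => W1 x yz.1 * W2 x yz.2.

Definition info_subadditive (G f : R -> R) : Prop :=
  forall (X Y Z : finType) (pX : X -> R) (W1 : X -> Y -> R) (W2 : X -> Z -> R),
    is_dist pX -> is_channel W1 -> is_channel W2 ->
    IGf G f pX (prod_channel W1 W2) <= IGf G f pX W1 + IGf G f pX W2.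

Definition capacity (G f : R -> R) (X Y : finType) (W : X -> Y -> R) : R :=
  sup [set r | exists pX : X -> R, is_dist pX /\ r = IGf G f pX W].

Definition convex_on_nonneg (f : R -> R) : Prop :=
  forall x y t, 0 <= x -> 0 <= y -> 0 <= t <= 1 ->
    f (t * x + (1 - t) * y) <= t * f x + (1 - t) * f y.

Definition nondecr_on_nonneg (G : R -> R) : Prop :=
  forall x y, 0 <= x -> x <= y -> G x <= G y.

Definition mem_channel (X Y : finType) (W : X -> Y -> R) (n : nat)
  (xn : {ffun 'I_n -> X}) (yn : {ffun 'I_n -> Y}) : R :=
  \prod_(i < n) W (xn i) (yn i).

Definition avg_error (X Y : finType) (W : X -> Y -> R) (n Msz : nat)
  (enc : 'I_Msz -> {ffun 'I_n -> X}) (dec : {ffun 'I_n -> Y} -> 'I_Msz) : R :=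
  \sum_(m < Msz) Msz%:R^-1 *
    \sum_(yn : {ffun 'I_n -> Y} | dec yn != m) mem_channel W (enc m) yn.

End Defs.

From mathcomp Require Import all_boot all_order all_algebra.
From mathcomp Require Import boolp classical_sets reals.
From mathcomp Require Import ring.
Import Order.TTheory GRing.Theory Num.Theory.
Local Open Scope ring_scope.

(* Upper bound: the n-fold memoryless channel from M is, after splitting off one
   output coordinate at a time, an iterated product of the channels
   m |-> W (X_i(m)); subadditivity and the fact that each of these is W with a
   relabelled input give I_{G,f}(M; Y^n) <= n * capacity.
   Lower bound: for any reference law q of Y^n, pushing p_M p_{Y^n|M} and p_M q
   to the event "the decoder is right" yields Bernoulli(1 - eps) and, since M is
   uniform and independent of Y^n under p_M q, Bernoulli(1/|M|) whatever q is.
   Data processing for D_f and Jensen's inequality for G then bound the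
   numerator G(D_f(Bern(1 - eps) || Bern(1/|M|))) by I_{G,f}(M; Y^n). *)

Set Implicit Arguments. Unset Strict Implicit. Unset Printing Implicit Defensive.

Section PushJoint.
Variable R : realType.

Definition push (T U : finType) (p : T -> R) (g : T -> U) : U -> R :=
  fun u => \sum_(t | g t == u) p t.

Definition joint (X Y : finType) (pX : X -> R) (W : X -> Y -> R) : X * Y -> R :=
  fun xy => pX xy.1 * W xy.1 xy.2.

Lemma sum_push (T U : finType) (p : T -> R) (g : T -> U) :
  \sum_u push p g u = \sum_t p t.
Proof. by rewrite [RHS](partition_big g predT). Qed.

Lemma push_dist (T U : finType) (p : T -> R) (g : T -> U) :
  is_dist p -> is_dist (push p g).
Proof.
by case=> p0 p1; split=> [u|]; [apply: sumr_ge0 | rewrite sum_push].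
Qed.

Lemma abs_cont_push (T U : finType) (p q : T -> R) (g : T -> U) :
  (forall t, 0 <= q t) -> abs_cont p q -> abs_cont (push p g) (push q g).
Proof.
move=> q0 pq u /(psumr_eq0P (fun t _ => q0 t)) qu0.
by apply: big1 => t /qu0; apply: pq.
Qed.

Lemma joint_dist (X Y : finType) (pX : X -> R) (W : X -> Y -> R) :
  is_dist pX -> is_channel W -> is_dist (joint pX W).
Proof.
case=> p0 p1 hW; split=> [[x y]|]; first by apply: mulr_ge0 => //; case: (hW x).
rewrite -(pair_big predT predT (fun x y => pX x * W x y)) /= -p1.
by apply: eq_bigr => x _; rewrite -mulr_sumr; case: (hW x) => _ ->; rewrite mulr1.
Qed.

Lemma dist_card_gt0 (T : finType) (p : T -> R) : is_dist p -> (0 < #|T|)%N.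
Proof.
case=> _ p1; rewrite lt0n; apply/negP => /eqP/card0_eq T0.
by move: p1; rewrite big_pred0 // => /eqP; rewrite eq_sym oner_eq0.
Qed.

Definition uniform (T : finType) : T -> R := fun _ => #|T|%:R^-1.

Lemma uniform_dist (T : finType) : (0 < #|T|)%N -> is_dist (@uniform T).
Proof.
move=> T0; split=> [t|]; first by rewrite invr_ge0 ler0n.
by rewrite sumr_const -(mulr_natr (_^-1)) mulVf // pnatr_eq0 -lt0n.
Qed.

End PushJoint.

Arguments uniform {R} T.
Arguments uniform_dist {R T}.

Section Divergence.
Variables (R : realType) (f : R -> R).
Hypothesis hf : convex_on_nonneg f.

Lemma perspective2_le (p1 q1 p2 q2 : R) :
  0 <= p1 -> 0 <= q1 -> 0 <= p2 -> 0 <= q2 ->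
  (q1 = 0 -> p1 = 0) -> (q2 = 0 -> p2 = 0) ->
  (q1 + q2) * f ((p1 + p2) / (q1 + q2)) <= q1 * f (p1 / q1) + q2 * f (p2 / q2).
Proof.
move=> p1_ge0 q1_ge0 p2_ge0 q2_ge0 pq1 pq2.
have [q1_0|q1_neq0] := eqVneq q1 0; first by rewrite q1_0 (pq1 q1_0) mul0r !add0r.
have [q2_0|q2_neq0] := eqVneq q2 0; first by rewrite q2_0 (pq2 q2_0) mul0r !addr0.
have q_gt0 : 0 < q1 + q2 by rewrite addr_gt0 // lt_def ?q1_neq0 ?q2_neq0.
have q_neq0 : q1 + q2 != 0 by rewrite gt_eqF.
have t01 : 0 <= q1 / (q1 + q2) <= 1.
  by rewrite divr_ge0 ?addr_ge0 //= ler_pdivrMr // mul1r lerDl.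
have t' : 1 - q1 / (q1 + q2) = q2 / (q1 + q2) by field.
have mid : q1 / (q1 + q2) * (p1 / q1) + q2 / (q1 + q2) * (p2 / q2) = (p1 + p2) / (q1 + q2).
  by field; rewrite ?q1_neq0 ?q2_neq0 ?q_neq0.
have := hf (divr_ge0 p1_ge0 q1_ge0) (divr_ge0 p2_ge0 q2_ge0) t01.
rewrite t' mid -(ler_pM2l q_gt0) => /le_trans; apply.
by rewrite mulrDr !mulrA !(mulrC (q1 + q2)) !mulfK.
Qed.

Lemma log_sum_le (I : eqType) (s : seq I) (P : pred I) (p q : I -> R) :
  (forall i, P i -> 0 <= p i) -> (forall i, P i -> 0 <= q i) ->
  (forall i, P i -> q i = 0 -> p i = 0) ->
  (\sum_(i <- s | P i) q i) * f ((\sum_(i <- s | P i) p i) / \sum_(i <- s | P i) q i)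
  <= \sum_(i <- s | P i) q i * f (p i / q i).
Proof.
move=> p0 q0 pq; elim: s => [|i s IH]; first by rewrite !big_nil mul0r.
rewrite !big_cons; case: ifP => // Pi.
have sum_pq : \sum_(j <- s | P j) q j = 0 -> \sum_(j <- s | P j) p j = 0.
  move=> /eqP; rewrite psumr_eq0 // => /allP q_eq0.
  apply: big1_seq => j /andP[Pj /q_eq0]; rewrite Pj => /eqP; exact: pq.
apply: le_trans (perspective2_le _ _ _ _ (pq i Pi) sum_pq) _ => //;
  try exact: sumr_ge0; [exact: p0 | exact: q0 | by rewrite lerD2l].
Qed.

Lemma convex_jensen (I : finType) (w x : I -> R) :
  (forall i, 0 <= w i) -> \sum_i w i = 1 -> (forall i, 0 < w i -> 0 <= x i) ->
  f (\sum_i w i * x i) <= \sum_i w i * f (x i).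
Proof.
move=> w0 w1 x0.
have wx0 i : 0 <= w i * x i.
  move: (w0 i); rewrite le_eqVlt => /orP[/eqP <-|wi_gt0]; first by rewrite mul0r.
  by apply: mulr_ge0; [exact: ltW | exact: x0].
have wx_abs i : predT i -> w i = 0 -> w i * x i = 0 by move=> _ ->; rewrite mul0r.
have := log_sum_le (index_enum I) (fun i _ => wx0 i) (fun i _ => w0 i) wx_abs.
rewrite w1 mul1r divr1 => /le_trans; apply; apply: ler_sum => i _.
by have [->|wi_neq0] := eqVneq (w i) 0; rewrite ?mul0r // (mulrC (w i) (x i)) mulfK.
Qed.

Hypothesis hf1 : f 1 = 0.

Lemma Df_ge0 (T : finType) (p q : T -> R) :
  is_dist p -> is_dist q -> abs_cont p q -> 0 <= Df f p q.
Proof.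
case=> p0 p1 [q0 q1] pq.
have := log_sum_le (index_enum T) (fun t _ => p0 t) (fun t _ => q0 t) (fun t (_ : predT t) => pq t).
by rewrite p1 q1 divr1 hf1 mulr0.
Qed.

Lemma Df_joint (X Y : finType) (pX : X -> R) (W : X -> Y -> R) (q : Y -> R) :
  Df f (joint pX W) (joint pX (fun=> q)) = \sum_x pX x * Df f (W x) q.
Proof.
rewrite /Df /joint.
rewrite -(pair_big predT predT (fun x y => pX x * q y * f (pX x * W x y / (pX x * q y)))) /=.
apply: eq_bigr => x _; rewrite mulr_sumr; apply: eq_bigr => y _.
have [->|px_neq0] := eqVneq (pX x) 0; first by rewrite !mul0r.
by rewrite -mulrA -mulf_div divff // mul1r.
Qed.

Lemma Df_push_le (T U : finType) (p q : T -> R) (g : T -> U) :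
  (forall t, 0 <= p t) -> (forall t, 0 <= q t) -> abs_cont p q ->
  Df f (push p g) (push q g) <= Df f p q.
Proof.
move=> p0 q0 pq; rewrite [Df f p q](partition_big g predT) //=.
by apply: ler_sum => u _; apply: log_sum_le => t _; [apply: p0 | apply: q0 | apply: pq].
Qed.

End Divergence.

Section ProductChannel.

Definition ffun_uncons (Y : finType) (k : nat) (yn : {ffun 'I_k.+1 -> Y}) :
  Y * {ffun 'I_k -> Y} := (yn ord0, [ffun i => yn (lift ord0 i)]).

Definition ffun_cons (Y : finType) (k : nat) (yyn : Y * {ffun 'I_k -> Y}) :
  {ffun 'I_k.+1 -> Y} := [ffun i => if unlift ord0 i is Some j then yyn.2 j else yyn.1].

Lemma ffun_uncons_bij (Y : finType) (k : nat) : bijective (@ffun_uncons Y k).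
Proof.
exists (@ffun_cons Y k) => [yn|[y yn]].
  by apply/ffunP => i; rewrite ffunE; case: unliftP => [j ->|->]; rewrite ?ffunE.
by rewrite /ffun_uncons ffunE unlift_none; congr pair; apply/ffunP => i; rewrite !ffunE liftK.
Qed.

Variable R : realType.

Definition prodn_channel (X Y : finType) (k : nat) (Ch : 'I_k -> X -> Y -> R) :
  X -> {ffun 'I_k -> Y} -> R := fun x yn => \prod_(i < k) Ch i x (yn i).

Lemma prodn_channelP (X Y : finType) (k : nat) (Ch : 'I_k -> X -> Y -> R) :
  (forall i, is_channel (Ch i)) -> is_channel (prodn_channel Ch).
Proof.
move=> hCh x; split=> [yn|]; first by apply: prodr_ge0 => i _; case: (hCh i x).
rewrite /prodn_channel -(bigA_distr_bigA (fun i y => Ch i x y)) /=.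
by apply: big1 => i _; case: (hCh i x).
Qed.

Lemma prodn_channelS (X Y : finType) (k : nat) (Ch : 'I_k.+1 -> X -> Y -> R) :
  prodn_channel Ch = fun x yn =>
    prod_channel (Ch ord0) (prodn_channel (fun i => Ch (lift ord0 i))) x (ffun_uncons yn).
Proof.
apply: funext => x; apply: funext => yn.
rewrite /prodn_channel /prod_channel big_ord_recl /=.
by congr (_ * _); apply: eq_bigr => i _; rewrite ffunE.
Qed.

End ProductChannel.

Section InformationMeasure.
Variables (R : realType) (G f : R -> R).

Lemma IGf_ge (X Y : finType) (pX : X -> R) (W : X -> Y -> R) (c : R) :
  is_dist pX -> is_channel W ->
  (forall q, is_dist q -> (forall x, 0 < pX x -> abs_cont (W x) q) ->
     c <= \sum_x pX x * G (Df f (W x) q)) ->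
  c <= IGf G f pX W.
Proof.
move=> hpX hW c_le; apply: lb_le_inf; last by move=> _ [q [hq ha ->]]; apply: c_le.
have hP := joint_dist hpX hW.
pose qY := push (joint pX W) snd.
exists (\sum_x pX x * G (Df f (W x) qY)), qY; split=> //; first exact: push_dist.
move=> x px_gt0 y /(psumr_eq0P (fun xy _ => proj1 hP xy)) /(_ (x, y) (eqxx y)) /eqP.
by rewrite /joint mulf_eq0 gt_eqF //= => /eqP.
Qed.

Lemma IGf_relabel (X Y Y' : finType) (pX : X -> R) (W : X -> Y -> R) (h : Y' -> Y) :
  bijective h -> IGf G f pX (fun x y' => W x (h y')) = IGf G f pX W.
Proof.
move=> [h' hK h'K].
have sum_h (F : Y -> R) : \sum_y F y = \sum_y' F (h y').
  by apply: reindex; apply: onW_bij; exists h'.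
congr inf; apply/seteqP; split=> _ [q [[q0 q1] ha ->]].
- exists (fun y => q (h' y)); split.
  + by split=> [y|]; rewrite ?sum_h /= ?(eq_bigr _ (fun y' _ => congr1 q (hK y'))).
  + by move=> x px y qy0; rewrite -[y]h'K; apply: ha.
  + apply: eq_bigr => x _; rewrite /Df sum_h.
    by under [in RHS]eq_bigr => y' _ do rewrite /= hK.
- exists (fun y' => q (h y')); split.
  + by split=> [y'|] //; rewrite -sum_h.
  + by move=> x px y' /ha; apply.
  + by apply: eq_bigr => x _; rewrite /Df sum_h.
Qed.

Lemma IGf_push (M X Y : finType) (pM : M -> R) (e : M -> X) (W : X -> Y -> R) :
  (forall m, 0 <= pM m) -> IGf G f pM (fun m => W (e m)) = IGf G f (push pM e) W.
Proof.
move=> pM0.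
have push_gt0 x : 0 < push pM e x -> exists2 m, e m = x & 0 < pM m.
  rewrite lt_def => /andP[]; rewrite psumr_neq0 // => /hasP[m _ /andP[/eqP em pm]] _.
  by exists m.
have push_ge m : pM m <= push pM e (e m).
  by rewrite /push (bigD1 m) //= lerDl sumr_ge0.
have value q : \sum_m pM m * G (Df f (W (e m)) q) = \sum_x push pM e x * G (Df f (W x) q).
  rewrite (partition_big e predT) //=; apply: eq_bigr => x _; rewrite mulr_suml.
  by apply: eq_bigr => m /eqP ->.
congr inf; apply/seteqP; split=> _ [q [hq ha ->]]; exists q; split=> //.
- by move=> x /push_gt0[m <-]; apply: ha.
- by move=> m pm_gt0; apply: ha; apply: lt_le_trans (push_ge m).
Qed.

Hypotheses (hf : convex_on_nonneg f) (hf1 : f 1 = 0).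
Hypotheses (hGmono : nondecr_on_nonneg G) (hG0 : G 0 = 0).

Lemma nondecr_ge0 (x : R) : 0 <= x -> 0 <= G x.
Proof. by move=> x0; rewrite -hG0; apply: hGmono. Qed.

Lemma IGf_le (X Y : finType) (pX : X -> R) (W : X -> Y -> R) (q : Y -> R) :
  is_dist pX -> is_channel W -> is_dist q -> (forall x, 0 < pX x -> abs_cont (W x) q) ->
  IGf G f pX W <= \sum_x pX x * G (Df f (W x) q).
Proof.
move=> [pX0 _] hW hq ha; apply: ge_inf; last by exists q.
exists 0 => _ [q' [hq' ha' ->]]; apply: sumr_ge0 => x _.
move: (pX0 x); rewrite le_eqVlt => /orP[/eqP <-|px_gt0]; first by rewrite mul0r.
by apply: mulr_ge0; [exact: ltW | apply/nondecr_ge0/(Df_ge0 hf hf1) => //; apply: ha'].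
Qed.

Lemma IGf_le_capacity (X Y : finType) (W : X -> Y -> R) (pX : X -> R) :
  is_channel W -> is_dist pX -> IGf G f pX W <= capacity G f W.
Proof.
move=> hW hpX; apply: ub_le_sup; last by exists pX.
exists (\sum_x G (Df f (W x) (uniform Y))) => _ [pX' [hpX' ->]].
have [x0 _] := card_gt0P (dist_card_gt0 hpX').
have hY := dist_card_gt0 (hW x0).
have unif_gt0 y : uniform Y y != 0 :> R by rewrite invr_eq0 pnatr_eq0 -lt0n.
have unif_abs x : abs_cont (W x) (uniform Y).
  by move=> y /eqP; rewrite (negbTE (unif_gt0 y)).
have := IGf_le hpX' hW (uniform_dist hY) (fun x _ => unif_abs x).
move=> /le_trans; apply.
apply: ler_sum => x _; rewrite -[leRHS]mul1r; apply: ler_wpM2r.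
  by apply/nondecr_ge0/(Df_ge0 hf hf1); [exact: hW | exact: uniform_dist | exact: unif_abs].
by case: hpX' => pX0 <-; rewrite (bigD1 x) //= lerDl sumr_ge0.
Qed.

Section ConvexG.
Hypothesis hGconv : convex_on_nonneg G.

(* Data processing through [g], then Jensen for [G]; the hypothesis makes the
   pushed reference law independent of the reference [q] being optimized. *)
Lemma IGf_ge_push (X Y U : finType) (pX : X -> R) (W : X -> Y -> R)
    (g : X * Y -> U) (qU : U -> R) :
  is_dist pX -> is_channel W ->
  (forall q, is_dist q -> push (joint pX (fun=> q)) g = qU) ->
  G (Df f (push (joint pX W) g) qU) <= IGf G f pX W.
Proof.
move=> hpX hW hqU; apply: IGf_ge => // q hq ha.
have hP := joint_dist hpX hW.
have hQ := @joint_dist _ _ _ pX (fun=> q) hpX (fun=> hq).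
have PQ : abs_cont (joint pX W) (joint pX (fun=> q)).
  move=> [x y] /eqP; rewrite /joint mulf_eq0 => /orP[/eqP -> | /eqP qy0]; first by rewrite mul0r.
  move: (proj1 hpX x); rewrite le_eqVlt => /orP[/eqP <- | px_gt0]; first by rewrite mul0r.
  by rewrite /= (ha x px_gt0 y qy0) mulr0.
rewrite -(hqU q hq); apply: le_trans (_ : G (Df f (joint pX W) (joint pX (fun=> q))) <= _).
  apply: hGmono; last exact: Df_push_le (proj1 hP) (proj1 hQ) PQ.
  apply: Df_ge0 => //; [exact: push_dist | exact: push_dist |].
  exact: abs_cont_push (proj1 hQ) PQ.
rewrite Df_joint; apply: convex_jensen => //; first exact: (proj1 hpX); first exact: (proj2 hpX).
by move=> x px_gt0; apply: Df_ge0 => //; apply: ha.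
Qed.

End ConvexG.

Section Subadditive.
Hypothesis hsub : info_subadditive G f.

Lemma IGf_prodn_channel_le (X Y : finType) (pX : X -> R) (k : nat)
    (Ch : 'I_k -> X -> Y -> R) :
  is_dist pX -> (forall i, is_channel (Ch i)) ->
  IGf G f pX (prodn_channel Ch) <= \sum_i IGf G f pX (Ch i).
Proof.
move=> hpX; elim: k Ch => [|k IH] Ch hCh.
  have hq : is_dist (fun _ : {ffun 'I_0 -> Y} => 1 : R).
    by split=> //; rewrite sumr_const card_ffun card_ord.
  rewrite big_ord0; apply: le_trans (IGf_le hpX (prodn_channelP hCh) hq _) _.
    by move=> x _ yn /eqP; rewrite oner_eq0.
  rewrite big1 // => x _; rewrite /Df big1 ?hG0 ?mulr0 // => yn _.
  by rewrite /prodn_channel big_ord0 divr1 hf1 mulr0.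
rewrite big_ord_recl prodn_channelS IGf_relabel; last exact: ffun_uncons_bij.
apply: le_trans (hsub hpX (hCh ord0) (prodn_channelP (fun i => hCh (lift ord0 i)))) _.
by rewrite lerD2l; apply: IH.
Qed.

Lemma IGf_mem_channel_le (M X Y : finType) (W : X -> Y -> R) (n : nat)
    (enc : M -> {ffun 'I_n -> X}) (pM : M -> R) :
  is_channel W -> is_dist pM ->
  IGf G f pM (fun m => mem_channel W (enc m)) <= n%:R * capacity G f W.
Proof.
move=> hW hpM.
apply: le_trans (IGf_prodn_channel_le (Ch := fun i m => W (enc m i)) hpM _) _ => [i m|].
  exact: hW.
rewrite mulr_natl -[in leRHS](card_ord n) -sumr_const; apply: ler_sum => i _.
rewrite (IGf_push (fun m => enc m i) W (proj1 hpM)).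
by apply: IGf_le_capacity => //; apply: push_dist.
Qed.

End Subadditive.

End InformationMeasure.

Section Decoding.
Variable R : realType.

Definition bernoulli (a : R) : bool -> R := fun b => if b then a else 1 - a.

Lemma bool_dist_true (e : bool -> R) : is_dist e -> e true = 1 - e false.
Proof. by case=> _; rewrite big_bool => <-; rewrite addrK. Qed.

Lemma bool_distE (e : bool -> R) : is_dist e -> e = bernoulli (e true).
Proof. by move=> he; apply: funext => -[] //=; rewrite (bool_dist_true he) subKr. Qed.

Lemma bernoulli_dist (a : R) : 0 <= a <= 1 -> is_dist (bernoulli a).
Proof.
by case/andP=> a0 a1; split=> [[]|]; rewrite /= ?subr_ge0 // big_bool /= subrKC.
Qed.

Lemma abs_cont_bernoulli (p : bool -> R) (a : R) : 0 < a < 1 -> abs_cont p (bernoulli a).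
Proof. by case/andP=> a0 a1 [] /= /eqP; rewrite ?subr_eq0 ?(gt_eqF a0) ?(gt_eqF a1). Qed.

Definition decode_ok (M Y : finType) (dec : Y -> M) (my : M * Y) : bool := dec my.2 == my.1.

Lemma blind_decoding_push (M Y : finType) (dec : Y -> M) (q : Y -> R) :
  (0 < #|M|)%N -> is_dist q ->
  push (joint (uniform M) (fun=> q)) (decode_ok dec) = bernoulli #|M|%:R^-1.
Proof.
move=> M_gt0 hq.
have hE := push_dist (decode_ok dec) (joint_dist (uniform_dist M_gt0) (fun=> hq)).
rewrite (bool_distE hE); congr bernoulli.
rewrite /push /joint /decode_ok; under eq_bigl => my do rewrite eqb_id.
rewrite -(pair_big_dep predT (fun m y => dec y == m) (fun m y => uniform M m * q y)) /=.
under eq_bigr => m _ do rewrite -mulr_sumr.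
by rewrite -mulr_sumr sum_push (proj2 hq) mulr1.
Qed.

Lemma decoding_error_push (X Y : finType) (W : X -> Y -> R) (n Msz : nat)
    (enc : 'I_Msz -> {ffun 'I_n -> X}) (dec : {ffun 'I_n -> Y} -> 'I_Msz) :
  is_channel W -> (0 < Msz)%N ->
  push (joint (uniform 'I_Msz) (fun m => mem_channel W (enc m))) (decode_ok dec)
  = bernoulli (1 - avg_error W enc dec).
Proof.
move=> hW M_gt0.
have hV : is_channel (fun m => mem_channel W (enc m)).
  exact: prodn_channelP (fun i m => hW (enc m i)).
have hU : is_dist (uniform 'I_Msz : 'I_Msz -> R) by apply: uniform_dist; rewrite card_ord.
have hE := push_dist (decode_ok dec) (joint_dist hU hV).
rewrite (bool_distE hE) (bool_dist_true hE); congr (bernoulli (1 - _)).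
rewrite /push /joint /decode_ok /avg_error /uniform card_ord.
under eq_bigl => my do rewrite eqbF_neg.
rewrite -(pair_big_dep predT (fun m yn => dec yn != m)
  (fun m yn => Msz%:R^-1 * mem_channel W (enc m) yn)) /=.
by apply: eq_bigr => m _; rewrite mulr_sumr.
Qed.

End Decoding.

Unset Implicit Arguments.

Theorem theorem5 (R : realType) (f G : R -> R)
  (hf : convex_on_nonneg f) (hf1 : f 1 = 0)
  (hGmono : nondecr_on_nonneg G) (hGconv : convex_on_nonneg G) (hG0 : G 0 = 0)
  (hsub : info_subadditive G f)
  (X Y : finType) (W : X -> Y -> R) (hW : is_channel W)
  (n Msz : nat) (hM : (2 <= Msz)%N)
  (enc : 'I_Msz -> {ffun 'I_n -> X}) (dec : {ffun 'I_n -> Y} -> 'I_Msz)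
  (eps : R) (heps : avg_error W enc dec = eps) :
  G (Msz%:R^-1 * f (Msz%:R * (1 - eps))
     + (Msz%:R - 1) / Msz%:R * f (Msz%:R * eps / (Msz%:R - 1)))
    / capacity G f W
  <= n%:R.
Proof.
have M_gt0 : (0 < Msz)%N by apply: leq_trans hM.
have M_pos : 0 < Msz%:R :> R by rewrite ltr0n.
have M1_pos : 0 < Msz%:R - 1 :> R by rewrite subr_gt0 ltr1n.
set A := (X in G X / _).
have A_Df : A = Df f (bernoulli (1 - eps)) (bernoulli Msz%:R^-1).
  rewrite /Df big_bool /= subKr /A; congr (_ * f _ + _ * f _).
  - by rewrite invrK mulrC.
  - by field; rewrite gt_eqF.
  - by field; rewrite !gt_eqF.
have hU : is_dist (uniform 'I_Msz : 'I_Msz -> R) by apply: uniform_dist; rewrite card_ord.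
have hV := prodn_channelP (fun i m => hW (enc m i)).
have invM : 0 < (Msz%:R^-1 : R) < 1 by rewrite invr_gt0 M_pos invf_lt1 // ltr1n.
rewrite -heps -(decoding_error_push enc dec hW M_gt0) in A_Df.
have GA_ge0 : 0 <= G A.
  apply: (nondecr_ge0 hGmono hG0); rewrite A_Df; apply: (Df_ge0 hf hf1).
  - exact: push_dist (joint_dist hU hV).
  - by apply: bernoulli_dist; case/andP: invM => *; rewrite !ltW.
  - exact: abs_cont_bernoulli.
have key : G A <= n%:R * capacity G f W.
  apply: le_trans (IGf_mem_channel_le hf hf1 hGmono hG0 hsub enc hW hU).
  rewrite A_Df; apply: (IGf_ge_push hf hf1 hGmono hGconv) => // q hq.
  by rewrite blind_decoding_push ?card_ord.
(* For a capacity [<= 0] the left-hand side is [<= 0], using [x / 0 = 0]. *)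
have [cap_le0|cap_gt0] := lerP (capacity G f W) 0.
  by apply: le_trans (ler0n _ n); rewrite mulr_ge0_le0 // invr_le0.
by rewrite ler_pdivrMr.
Qed.
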